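(* Let $\alpha\in(0,\infty)$, $\beta\in(0,1]$, and let $Y$ be a non-negative random variable with $\mathbb{E}Y^2<\infty$ and $\mathrm{Var}\,Y\leq\mathbb{E}Y=:\mu$. Then $$\mathbb{E}\frac{1}{(\alpha+Y)^\beta}\leq\frac{\widetilde C(\alpha,\beta)}{(\alpha+\mu)^\beta},$$ where $\widetilde C(\alpha,\beta)=\sup_{x\in[0,\infty)}h(x)$ with $h(x)=\frac{(\alpha+x)^\beta}{1+x}\big(\frac{x}{(\alpha+1+x)^\beta}+\frac{1}{\alpha^\beta}\big)$. Moreover, for fixed $\alpha$ and $\beta$ the factor $\widetilde C(\alpha,\beta)$ cannot be replaced by a smaller constant (in the sense that the inequality with a smaller constant fails for some such $Y$). *)

From HB Require Import structures.
From mathcomp Require Import all_boot all_order all_algebra.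
From mathcomp Require Import all_classical all_reals all_analysis.
Set Implicit Arguments. Unset Strict Implicit. Unset Printing Implicit Defensive.
Import Order.TTheory GRing.Theory Num.Theory.
Local Open Scope classical_set_scope.
Local Open Scope ring_scope.

Definition h_fun (R : realType) (alpha beta x : R) : R :=
  (alpha + x) `^ beta / (1 + x) *
  (x / (alpha + 1 + x) `^ beta + 1 / alpha `^ beta).

Definition Ctilde (R : realType) (alpha beta : R) : R :=
  sup [set h_fun alpha beta x | x in `[0, +oo[%classic].

(* Write F u = u ^ (-beta).  Since F''' <= 0, the divided difference
   slope u = (F u - F alpha) / (u - alpha) is concave on (alpha, +oo), so it lies
   below its tangent at t = alpha + 1 + mu; multiplying by u - alpha gives, for y >= 0,
     F (alpha + y) <= F alpha + y slope t + c y (y - 1 - mu)   with c = slope' t >= 0.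
   As E[Y (Y - 1 - mu)] = Var Y - mu <= 0, this yields
   E F(alpha + Y) <= F alpha + mu slope t = h(mu) / (alpha + mu) ^ beta: the right-hand
   side is E F(alpha + Z) for the two-point law Z in {0, 1 + mu} with mean and variance mu.
   These two-point laws also show that sup h cannot be lowered. *)

From HB Require Import structures.
From mathcomp Require Import all_boot all_order all_algebra.
From mathcomp Require Import all_classical all_reals all_analysis.
From mathcomp Require Import ring lra measurable_realfun.
Import Order.TTheory GRing.Theory Num.Theory.
Import numFieldTopology.Exports numFieldNormedType.Exports.
Local Open Scope classical_set_scope.
Local Open Scope ring_scope.

Lemma scalerE {R : realType} (k x : R) : k *: x = k * x.
Proof. by []. Qed.

Section monotone.
Context {R : realType}.
Implicit Types (f df : R -> R) (x y : R).

Lemma ger0_is_derive_le f df x y : x <= y ->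
  (forall z, x <= z <= y -> is_derive z 1 f (df z)) ->
  (forall z, x < z < y -> 0 <= df z) -> f x <= f y.
Proof.
move=> xy fdf df_ge0.
have fdf_in z : x < z < y -> is_derive z 1 f (df z).
  by case/andP=> xz zy; apply: fdf; rewrite !ltW.
apply: (@ger0_derive1_le_cc _ f x y); rewrite ?in_itv /= ?lexx ?xy //.
- by move=> z /[!in_itv] /= /fdf_in [].
- move=> z /[!in_itv] /= zxy; rewrite derive1E.
  by have [_ ->] := fdf_in z zxy; exact: df_ge0.
- by apply: derivable_within_continuous => z /[!in_itv] /= /fdf [].
Qed.

Lemma ler0_is_derive_ge f df x y : x <= y ->
  (forall z, x <= z <= y -> is_derive z 1 f (df z)) ->
  (forall z, x < z < y -> df z <= 0) -> f y <= f x.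
Proof.
move=> xy fdf df_le0; rewrite -lerN2.
apply: (@ger0_is_derive_le (fun z => - f z) (fun z => - df z)) => // z zxy.
- exact: is_deriveN (fdf z zxy).
- by rewrite oppr_ge0 df_le0.
Qed.

End monotone.

Section slope.
Context {R : realType}.

Definition taylor_rem1 (F F' : R -> R) (a u : R) := F a - (F u + F' u * (a - u)).
Definition taylor_rem2 (F F' F'' : R -> R) (a u : R) :=
  taylor_rem1 F F' a u - F'' u / 2 * (a - u) ^+ 2.

Definition slope (F : R -> R) (a u : R) := (F u - F a) / (u - a).
Definition slope' (F F' : R -> R) (a u : R) := taylor_rem1 F F' a u / (u - a) ^+ 2.

End slope.

Section slope_concave.
Context {R : realType} {F F' F'' F''' : R -> R} {a : R}.
Hypothesis F_F' : forall x, a <= x -> is_derive x 1 F (F' x).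
Hypothesis F'_F'' : forall x, a <= x -> is_derive x 1 F' (F'' x).
Hypothesis F''_F''' : forall x, a <= x -> is_derive x 1 F'' (F''' x).
Hypothesis F''_ge0 : forall x, a <= x -> 0 <= F'' x.
Hypothesis F'''_le0 : forall x, a <= x -> F''' x <= 0.

Lemma is_derive_taylor_rem1 x : a <= x ->
  is_derive x 1 (taylor_rem1 F F' a) (F'' x * (x - a)).
Proof.
move=> ax; have dF := F_F' x ax; have dF' := F'_F'' x ax.
(* the derivative is found by instance resolution, from [dF] and [dF'] *)
by apply: is_derive_eq; rewrite !scalerE; ring.
Qed.

Lemma is_derive_taylor_rem2 x : a <= x ->
  is_derive x 1 (taylor_rem2 F F' F'' a) (- F''' x / 2 * (x - a) ^+ 2).
Proof.
move=> ax; have dT := is_derive_taylor_rem1 x ax; have dF'' := F''_F''' x ax.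
by apply: is_derive_eq; rewrite !scalerE; field.
Qed.

Lemma taylor_rem1_ge0 u : a <= u -> 0 <= taylor_rem1 F F' a u.
Proof.
move=> au; have -> : 0 = taylor_rem1 F F' a a by rewrite /taylor_rem1 subrr; ring.
apply: ger0_is_derive_le au _ _ => [z /andP[az _]|z /andP[az _]].
  exact: is_derive_taylor_rem1.
by rewrite mulr_ge0 ?F''_ge0 ?subr_ge0 ?ltW.
Qed.

Lemma taylor_rem2_ge0 u : a <= u -> 0 <= taylor_rem2 F F' F'' a u.
Proof.
move=> au; have -> : 0 = taylor_rem2 F F' F'' a a.
  by rewrite /taylor_rem2 /taylor_rem1 subrr; ring.
apply: ger0_is_derive_le au _ _ => [z /andP[az _]|z /andP[az _]].
  exact: is_derive_taylor_rem2.
by rewrite mulr_ge0 ?sqr_ge0 // mulr_ge0 // oppr_ge0 F'''_le0 // ltW.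
Qed.

Lemma is_derive_slope x : a < x -> is_derive x 1 (slope F a) (slope' F F' a x).
Proof.
move=> ax; have xa : x - a != 0 by rewrite subr_eq0 gt_eqF.
have dF := F_F' x (ltW ax).
have dV := @is_deriveV _ (fun y => y - a) x _ 1 xa _.
apply: is_derive_eq; rewrite /slope' /taylor_rem1 !scalerE.
by field.
Qed.

Lemma is_derive_slope' x : a < x ->
  is_derive x 1 (slope' F F' a) (- 2 * taylor_rem2 F F' F'' a x / (x - a) ^+ 3).
Proof.
move=> ax; have xa : x - a != 0 by rewrite subr_eq0 gt_eqF.
have dT := is_derive_taylor_rem1 x (ltW ax).
have dV := @is_deriveV _ (fun y => (y - a) ^+ 2) x _ 1 (expf_neq0 2 xa) _.
apply: is_derive_eq; rewrite /taylor_rem2 !scalerE.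
by field.
Qed.

Lemma slope'_ge0 x : a <= x -> 0 <= slope' F F' a x.
Proof. by move=> ax; rewrite divr_ge0 ?sqr_ge0 ?taylor_rem1_ge0. Qed.

Lemma slope'_le y z : a < y -> y <= z -> slope' F F' a z <= slope' F F' a y.
Proof.
move=> ay yz; apply: ler0_is_derive_ge yz _ _ => w /andP[yw _].
  exact/is_derive_slope'/(lt_le_trans ay).
have aw := lt_trans ay yw; have wa : 0 <= w - a by rewrite subr_ge0 ltW.
by rewrite !mulNr oppr_le0 divr_ge0 ?exprn_ge0 // mulr_ge0 // taylor_rem2_ge0 // ltW.
Qed.

Lemma slope_le_tangent t u : a < t -> a < u ->
  slope F a u <= slope F a t + slope' F F' a t * (u - t).
Proof.
move=> at_ au; rewrite -subr_ge0.
pose gap v := slope F a t + slope' F F' a t * (v - t) - slope F a v.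
pose dgap v := slope' F F' a t - slope' F F' a v.
have gap_t : gap t = 0 by rewrite /gap subrr mulr0 addr0 subrr.
have gap_dgap v : a < v -> is_derive v 1 gap (dgap v).
  move=> av; have dS := is_derive_slope v av.
  by apply: is_derive_eq; rewrite /dgap scalerE; ring.
rewrite -/(gap u) -gap_t; have [tu|ut] := leP t u.
  apply: (@ger0_is_derive_le R gap dgap) tu _ _ => v /andP[tv _].
    exact/gap_dgap/(lt_le_trans at_ tv).
  by rewrite /dgap subr_ge0 slope'_le // ltW.
apply: (@ler0_is_derive_ge R gap dgap) (ltW ut) _ _ => v /andP[uv vt].
  exact/gap_dgap/(lt_le_trans au uv).
by rewrite /dgap subr_le0 slope'_le // ?ltW // (lt_trans au).
Qed.

Lemma le_chord_tangent t u : a < t -> a <= u ->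
  F u <= F a + (u - a) * (slope F a t + slope' F F' a t * (u - t)).
Proof.
move=> at_; rewrite le_eqVlt => /predU1P[<-|au]; first by rewrite subrr mul0r addr0.
have -> : F u = F a + (u - a) * slope F a u.
  by rewrite /slope mulrC divfK ?subr_eq0 ?gt_eqF //; ring.
by rewrite lerD2l ler_wpM2l ?subr_ge0 ?(ltW au) ?slope_le_tangent.
Qed.

End slope_concave.

Section inverse_power.
Context {R : realType}.
Variables (b a : R).
Hypotheses (b_gt0 : 0 < b) (a_gt0 : 0 < a).

Lemma is_derive_mul_powR (c r x : R) : 0 < x ->
  is_derive x 1 (fun u => c * u `^ r) (c * r * x `^ (r - 1)).
Proof.
move=> x0; have dP := is_derive1_powR r x0.
by apply: is_derive_eq; rewrite scalerE; ring.
Qed.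

Let F u := u `^ (-b).
Let F' u := - b * u `^ (-b - 1).
Let F'' u := - b * (- b - 1) * u `^ (-b - 1 - 1).
Let F''' u := - b * (- b - 1) * (- b - 1 - 1) * u `^ (-b - 1 - 1 - 1).

Let F_F' x : a <= x -> is_derive x 1 F (F' x).
Proof. by move=> ax; apply/is_derive1_powR/(lt_le_trans a_gt0). Qed.

Let F'_F'' x : a <= x -> is_derive x 1 F' (F'' x).
Proof. by move=> ax; apply/is_derive_mul_powR/(lt_le_trans a_gt0). Qed.

Let F''_F''' x : a <= x -> is_derive x 1 F'' (F''' x).
Proof. by move=> ax; apply/is_derive_mul_powR/(lt_le_trans a_gt0). Qed.

Let F''_ge0 x : a <= x -> 0 <= F'' x.
Proof.
move=> _; have b0 := ltW b_gt0.
rewrite /F''; have -> : - b * (- b - 1) = b * (b + 1) by ring.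
by rewrite mulr_ge0 ?powR_ge0 ?mulr_ge0 ?addr_ge0.
Qed.

Let F'''_le0 x : a <= x -> F''' x <= 0.
Proof.
move=> _; have b0 := ltW b_gt0.
rewrite /F'''; have -> : - b * (- b - 1) * (- b - 1 - 1) = - (b * (b + 1) * (b + 2)) by ring.
by rewrite mulr_le0_ge0 ?powR_ge0 // oppr_le0 !mulr_ge0 ?addr_ge0.
Qed.

Lemma powRN_le_chord_tangent t u : a < t -> a <= u ->
  F u <= F a + (u - a) * (slope F a t + slope' F F' a t * (u - t)).
Proof. exact: le_chord_tangent F_F' F'_F'' F''_F''' F'''_le0 t u. Qed.

Lemma powRN_slope'_ge0 t : a <= t -> 0 <= slope' F F' a t.
Proof. exact: slope'_ge0 F_F' F'_F'' F''_ge0 t. Qed.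

End inverse_power.

Section variance_le_mean.
Local Open Scope ereal_scope.
Context {d} {T : measurableType d} {R : realType} {P : probability T R}.

Lemma Lfun2_sqr_expectation {Y : T -> R} : measurable_fun setT Y ->
  'E_P[fun w => (Y w ^+ 2)%R] < +oo -> Y \in Lfun P 2%:E.
Proof.
move=> mY EY2; rewrite inE; apply/andP; split; first by rewrite inE.
rewrite inE /= /finite_norm; apply: (@lty_poweRy _ _ 2) => //.
rewrite poweR_Lnorm // (eq_integral (fun w => (Y w ^+ 2)%:E)).
  by move: EY2; rewrite unlock.
by move=> w _; rewrite /= powR_mulrn // real_normK ?num_real.
Qed.

Lemma centered_sqr_Lfun1 (Y : T -> R) (m : R) : measurable_fun setT Y ->
  'E_P[fun w => ((Y w - m) ^+ 2)%R] < +oo ->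
  (fun w => ((Y w - m) ^+ 2)%R) \in Lfun P 1.
Proof.
move=> mY EY2; apply/Lfun1_integrable/integrableP; split.
  apply/measurable_EFinP; apply: measurable_funX.
  by apply: measurable_funB => //; exact: measurable_cst.
rewrite (eq_integral (fun w => ((Y w - m) ^+ 2)%:E)).
  by move: EY2; rewrite unlock.
by move=> w _; rewrite /= ger0_norm ?sqr_ge0.
Qed.

Lemma expectation_le_of_variance_le_mean {Y Z : T -> R} {p q c : R} :
  Y \in Lfun P 1 -> 'V_P[Y] <= 'E_P[Y] -> (0 <= c)%R ->
  measurable_fun setT Z -> (forall w, 0 <= Z w)%R ->
  (forall w, Z w <= p + q * Y w + c * Y w * (Y w - 1 - fine 'E_P[Y]))%R ->
  'E_P[Z] <= (p + q * fine 'E_P[Y])%:E.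
Proof.
move=> Y1 VY c0 mZ Z0 Zle.
have mY : measurable_fun setT Y by have := sub_Lfun_mfun Y1; rewrite inE.
set m := fine 'E_P[Y].
have EY : 'E_P[Y] = m%:E by rewrite fineK // expectation_fin_num.
pose D w := ((Y w - m) ^+ 2)%R.
have VD : 'V_P[Y] = 'E_P[D] by rewrite /variance covariance.unlock.
have D1 : D \in Lfun P 1.
  by rewrite centered_sqr_Lfun1 // -VD (le_lt_trans VY) // EY ltry.
set v := fine 'V_P[Y].
have VE : 'V_P[Y] = v%:E by rewrite fineK // VD expectation_fin_num.
(* the quadratic bound, rewritten around the centered square whose mean is 'V_P[Y] *)
pose W := (cst (p - c * m ^+ 2) \+ (q + c * (m - 1)) \o* Y \+ c \o* D)%R.
have W1 : W \in Lfun P 1 by rewrite !rpredD ?Lfun_cst ?Lfun_scale.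
have EW : 'E_P[W] = (p - c * m ^+ 2 + (q + c * (m - 1)) * m + c * v)%:E.
  rewrite 2?expectationD ?rpredD ?Lfun_cst ?Lfun_scale // expectation_cst.
  by rewrite !expectationZl // EY -VD VE.
have WE w : W w = (p + q * Y w + c * Y w * (Y w - 1 - m))%R.
  by rewrite /W /D /=; ring.
apply: (@le_trans _ _ 'E_P[W]).
  apply: expectation_le => //; first by have := sub_Lfun_mfun W1; rewrite inE.
    by move=> w; rewrite WE; exact: le_trans (Zle w).
  by apply: aeW => w; rewrite WE; exact: Zle.
rewrite EW lee_fin -subr_ge0.
have vm : (v <= m)%R by rewrite -lee_fin -VE -EY.
have -> : (p + q * m - (p - c * m ^+ 2 + (q + c * (m - 1)) * m + c * v)
  = c * (m - v))%R by ring.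
by rewrite mulr_ge0 // subr_ge0.
Qed.

End variance_le_mean.

Lemma h_fun_two_point {R : realType} (alpha beta x : R) : 0 < alpha -> 0 <= x ->
  h_fun alpha beta x / (alpha + x) `^ beta =
  x / (1 + x) * (alpha + (1 + x)) `^ (- beta) + (1 - x / (1 + x)) * alpha `^ (- beta).
Proof.
move=> a0 x0.
have n1 : (alpha + x) `^ beta != 0 by rewrite gt_eqF // powR_gt0 //; lra.
have n2 : (alpha + 1 + x) `^ beta != 0 by rewrite gt_eqF // powR_gt0 //; lra.
have n3 : alpha `^ beta != 0 by rewrite gt_eqF // powR_gt0.
have n4 : 1 + x != 0 by rewrite gt_eqF //; lra.
by rewrite /h_fun !powRN addrA; field; rewrite n1 n2 n3 n4.
Qed.

Lemma powR_le_1_add {R : realType} [b c : R] : 0 < b <= 1 -> 0 < c ->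
  c `^ b <= 1 + c.
Proof.
move=> /andP[b0 b1] c0; have [c1|c1] := leP 1 c.
  by have := ler1_powR c1 b1; lra.
have : c `^ b <= c `^ 0 by apply: ger_powR; rewrite ?c0 ?ltW.
by rewrite powRr0; lra.
Qed.

Lemma h_fun_ub {R : realType} (alpha beta x : R) : 0 < alpha -> 0 < beta <= 1 ->
  0 <= x -> h_fun alpha beta x <= 1 + (1 + alpha) / alpha `^ beta.
Proof.
move=> a0 b01 x0; have /andP[b0 _] := b01.
set P1 := (alpha + x) `^ beta; set P2 := (alpha + 1 + x) `^ beta.
set Q := alpha `^ beta.
have P1_gt0 : 0 < P1 by apply: powR_gt0; lra.
have P2_gt0 : 0 < P2 by apply: powR_gt0; lra.
have Q_gt0 : 0 < Q by apply: powR_gt0.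
have x1 : 0 < 1 + x by lra.
have -> : h_fun alpha beta x = P1 / P2 * (x / (1 + x)) + P1 / (1 + x) / Q.
  by rewrite /h_fun -/P1 -/P2 -/Q; field; rewrite !gt_eqF.
have P12 : P1 / P2 <= 1.
  rewrite ler_pdivrMr // mul1r; apply: (ge0_ler_powR (ltW b0)); rewrite ?nnegrE; lra.
have P1x : P1 / (1 + x) <= 1 + alpha.
  have P1_le : P1 <= 1 + (alpha + x) by apply: powR_le_1_add => //; lra.
  by rewrite ler_pdivrMr //; nra.
have xx1 : x / (1 + x) <= 1 by rewrite ler_pdivrMr // mul1r; lra.
have : P1 / (1 + x) / Q <= (1 + alpha) / Q by rewrite ler_wpM2r // invr_ge0 ltW.
have : 0 <= P1 / P2 by rewrite divr_ge0 // ltW.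
have : 0 <= x / (1 + x) by rewrite divr_ge0 // ltW.
nra.
Qed.

Lemma h_fun_le_Ctilde {R : realType} (alpha beta x : R) : 0 < alpha -> 0 < beta <= 1 ->
  0 <= x -> h_fun alpha beta x <= Ctilde alpha beta.
Proof.
move=> a0 b01 x0; apply: ub_le_sup; last by exists x => //=; rewrite in_itv /= x0.
exists (1 + (1 + alpha) / alpha `^ beta) => _ [y y0 <-]; apply: h_fun_ub => //.
by move: y0; rewrite /= in_itv /= andbT.
Qed.

Lemma expectation_powRN_le_Ctilde (R : realType) (alpha beta : R) :
  0 < alpha -> 0 < beta <= 1 ->
  forall (d : measure_display) (T : measurableType d) (P : probability T R)
     (Y : {RV P >-> R}),
     (forall w, 0 <= Y w) ->
     ('E_P[fun w => (Y w ^+ 2)%R] < +oo)%E ->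
     ('V_P[Y] <= 'E_P[Y])%E ->
     ('E_P[fun w => (1 / (alpha + Y w) `^ beta)%R]
        <= (Ctilde alpha beta / (alpha + fine 'E_P[Y]) `^ beta)%:E)%E.
Proof.
move=> a0 b01 d T P Y Y0 EY2 VY; have /andP[b0 _] := b01.
have mY : measurable_fun setT Y by [].
have Y1 : (Y : T -> R) \in Lfun P 1.
  by rewrite (Lfun_subset12 _ (Lfun2_sqr_expectation mY EY2)) ?fin_num_measure.
set m := fine 'E_P[Y].
have m0 : 0 <= m by rewrite fine_ge0 // expectation_ge0.
set t := alpha + 1 + m.
have at_ : alpha < t by rewrite /t; lra.
pose F u := u `^ (- beta).
pose G := slope F alpha t; pose c := slope' F (fun u => - beta * u `^ (- beta - 1)) alpha t.
have c0 : 0 <= c by exact/powRN_slope'_ge0/ltW.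
have bound w : (alpha + Y w) `^ (- beta) <=
    alpha `^ (- beta) + G * Y w + c * Y w * (Y w - 1 - m).
  have -> : alpha `^ (- beta) + G * Y w + c * Y w * (Y w - 1 - m) =
      alpha `^ (- beta) + (alpha + Y w - alpha) * (G + c * (alpha + Y w - t)).
    by rewrite /t; ring.
  by apply: powRN_le_chord_tangent; rewrite ?lerDl.
have -> : (fun w => 1 / (alpha + Y w) `^ beta) = (fun w => (alpha + Y w) `^ (- beta)).
  by apply/funext => w; rewrite powRN div1r.
apply: le_trans (expectation_le_of_variance_le_mean Y1 VY c0 _ _ bound) _.
- apply: measurableT_comp (measurable_powR _) _.
  by apply: measurable_funD => //; exact: measurable_cst.
- by move=> w; exact: powR_ge0.
have am : 0 < alpha + m by lra.
rewrite lee_fin -/m ler_pdivlMr ?powR_gt0 //.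
have -> : alpha `^ (- beta) + G * m = h_fun alpha beta m / (alpha + m) `^ beta.
  rewrite h_fun_two_point // /G /slope /F /t addrA.
  by field; rewrite gt_eqF //; lra.
by rewrite divfK ?gt_eqF ?powR_gt0 // h_fun_le_Ctilde.
Qed.

Definition two_point {R : realType} (x : R) (w : bool) : R := if w then 1 + x else 0.

Lemma measurable_two_point {R : realType} (x : R) : measurable_fun setT (two_point x).
Proof. by []. Qed.

HB.instance Definition _ {R : realType} (x : R) :=
  isMeasurableFun.Build _ _ _ _ (two_point x) (measurable_two_point x).

Lemma Ctilde_sharp (R : realType) (alpha beta : R) :
  0 < alpha -> 0 < beta <= 1 ->
  (forall C : R, C < Ctilde alpha beta ->
     exists (d : measure_display) (T : measurableType d) (P : probability T R)
       (Y : {RV P >-> R}),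
       [/\ forall w, 0 <= Y w,
           ('E_P[fun w => (Y w ^+ 2)%R] < +oo)%E,
           ('V_P[Y] <= 'E_P[Y])%E &
           ((C / (alpha + fine 'E_P[Y]) `^ beta)%:E
              < 'E_P[fun w => (1 / (alpha + Y w) `^ beta)%R])%E]).
Proof.
move=> a0 b01 C CC.
have [_ [x x0 <-] Cx] : exists2 y, [set h_fun alpha beta x | x in `[0, +oo[] y & C < y.
  by apply: sup_gt CC; exists (h_fun alpha beta 0), 0 => //=; rewrite in_itv /= lexx.
have {}x0 : 0 <= x by move: x0; rewrite /= in_itv /= andbT.
have x1 : 0 < 1 + x by lra.
set p := x / (1 + x).
have p01 : 0 <= p <= 1.
  by rewrite /p divr_ge0 ?(ltW x1) //= ler_pdivrMr // mul1r; lra.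
have EE (f : bool -> R) : (forall w, 0 <= f w) ->
    ('E_(bernoulli_prob p)[f] = (p * f true + (1 - p) * f false)%:E)%E.
  by move=> f0; rewrite unlock integral_bernoulli_prob.
have EY : ('E_(bernoulli_prob p)[two_point x] = x%:E)%E.
  rewrite EE; last by case; rewrite /two_point; lra.
  by rewrite /two_point /p; congr (_%:E); field; rewrite gt_eqF.
exists _, bool, (bernoulli_prob p), (two_point x : {mfun bool >-> R}); split.
- by case => /=; rewrite /two_point; lra.
- by rewrite EE ?ltry // => w; rewrite sqr_ge0.
- rewrite /variance covariance.unlock EY /= EE => [|w]; last by rewrite -expr2 sqr_ge0.
  rewrite lee_fin -[_ true]/((1 + x - x) ^+ 2) -[_ false]/((0 - x) ^+ 2) /p.
  by rewrite le_eqVlt; apply/orP; left; apply/eqP; field; rewrite gt_eqF.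
- rewrite EY /= EE => [|w]; last by rewrite divr_ge0 ?powR_ge0.
  rewrite lte_fin /two_point /= addr0 !div1r -!powRN -/p -h_fun_two_point //.
  by rewrite powRN ltr_pM2r // invr_gt0 powR_gt0 //; lra.
Qed.

Theorem mainTheorem9 (R : realType) (alpha beta : R) :
  0 < alpha -> 0 < beta <= 1 ->
  (forall (d : measure_display) (T : measurableType d) (P : probability T R)
     (Y : {RV P >-> R}),
     (forall w, 0 <= Y w) ->
     ('E_P[fun w => (Y w ^+ 2)%R] < +oo)%E ->
     ('V_P[Y] <= 'E_P[Y])%E ->
     ('E_P[fun w => (1 / (alpha + Y w) `^ beta)%R]
        <= (Ctilde alpha beta / (alpha + fine 'E_P[Y]) `^ beta)%:E)%E)
  /\
  (forall C : R, C < Ctilde alpha beta ->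
     exists (d : measure_display) (T : measurableType d) (P : probability T R)
       (Y : {RV P >-> R}),
       [/\ forall w, 0 <= Y w,
           ('E_P[fun w => (Y w ^+ 2)%R] < +oo)%E,
           ('V_P[Y] <= 'E_P[Y])%E &
           ((C / (alpha + fine 'E_P[Y]) `^ beta)%:E
              < 'E_P[fun w => (1 / (alpha + Y w) `^ beta)%R])%E]).
Proof.
move=> alpha_gt0 beta01; split.
- exact: expectation_powRN_le_Ctilde.
- exact: Ctilde_sharp.
Qed.
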